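(* Let $\lambda$ be a partition of $n$, let $t=\lambda_2-1$ and $s=\lambda_1-1$, and for $1\le k\le t$ let $b_k=\lambda'_1+\cdots+\lambda'_k-k+1$ (the entry in the top cell of column $k$ of the regular filling). Then $\mathcal{I}_\lambda$ is generated by the union of the following sets: (column 0) $e_1(n),\dots,e_{\ell(\lambda)-1}(n)$ (here $\ell(\lambda)=\lambda'_1=b_1$); (column $k$, for each $1\le k\le t$) $e_{b_k}(n-k)$; (last column, only if $s>t$) $e_{n-s}(n-s)$, i.e. all square-free monomials of degree $n-s$. Moreover, the same remains a generating set if the set $e_{b_1}(n-1)$ is replaced by $\{x_1^{b_1},\dots,x_n^{b_1}\}$. If $\lambda=(1^n)$ is the one-column partition, one also adds the element $e_n(n)=x_1\cdots x_n$ to this generating set; if $\lambda=(n)$ is the one-row partition, $\mathcal{I}_{(n)}=(x_1,\dots,x_n)$.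
   Context: $k$ is a field of characteristic $0$ and $R=k[x_1,\dots,x_n]$. For a set $S$ of variables, $e_r(S)$ is the $r$-th elementary symmetric polynomial in the variables of $S$ ($e_0=1$, and $e_r(S)=0$ if $r>|S|$). For $1\le m\le n$, $e_r(m)$ denotes the set $\{e_r(S): S\subseteq\{x_1,\dots,x_n\},\ |S|=m\}$. A partition $\lambda=(\lambda_1\ge\lambda_2\ge\cdots)$ of $n$ (with $\lambda_i=0$ beyond its length) has length $\ell(\lambda)$ and conjugate $\lambda'$ with $\lambda'_i=\#\{j:\lambda_j\ge i\}$. The Young diagram of $\lambda$ is drawn with rows counted from the bottom (bottom row of length $\lambda_1$), left-justified; columns are numbered $0,1,\dots,\lambda_1-1$ from left to right, column $c$ having height $\lambda'_{c+1}$. For $1\le m\le n$ put $\delta_m(\lambda)=\lambda'_n+\cdots+\lambda'_{n-m+1}$ (with $\lambda'_i=0$ for $i>\lambda_1$). The De Concini–Procesi ideal $\mathcal{I}_\lambda\subseteq R$ is the ideal generated by all elements of the sets $e_r(m)$ with $1\le m\le n$ and $m\ge r>m-\delta_m(\lambda)$. The regular filling of $\lambda$: for each column $c$, the bottom cell of column $c$ receives $n-c$, and the remaining $\lambda'_{c+1}-1$ cells of column $c$ receive, from top to bottom, the consecutive integers $1+\sum_{d<c}(\lambda'_{d+1}-1),\dots,\sum_{d\le c}(\lambda'_{d+1}-1)$. *)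

From HB Require Import structures.
From mathcomp Require Import all_boot all_order all_algebra.
From mathcomp Require Import mpoly.
Set Implicit Arguments. Unset Strict Implicit. Unset Printing Implicit Defensive.
Import GRing.Theory.
Local Open Scope ring_scope.

Definition in_ideal (k : fieldType) (n : nat) (G : {mpoly k[n]} -> Prop)
  (p : {mpoly k[n]}) : Prop :=
  exists l : seq ({mpoly k[n]} * {mpoly k[n]}),
    (forall q, q \in l -> G q.2) /\ p = \sum_(q <- l) q.1 * q.2.

Definition esymS (k : fieldType) (n : nat) (S : {set 'I_n}) (r : nat)
  : {mpoly k[n]} :=
  \sum_(T : {set 'I_n} | (T \subset S) && (#|T| == r)) \prod_(i in T) 'X_i.

Definition is_partition (n : nat) (la : seq nat) : bool :=
  [&& sorted geq la, all (fun x => 0 < x) la & sumn la == n]%N.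

(* lambda_i (1-indexed, 0 beyond the length) *)
Definition part (la : seq nat) (i : nat) : nat := nth 0%N la i.-1.

Definition conjp (la : seq nat) (i : nat) : nat :=
  count (fun x => i <= x)%N la.

Definition delta (n : nat) (la : seq nat) (m : nat) : nat :=
  (\sum_(n - m + 1 <= i < n + 1) conjp la i)%N.

(* Generators of the De Concini--Procesi ideal:
   e_r(S), |S| = m, 1 <= m <= n, m >= r > m - delta_m(lambda)
   (the last condition written as m < r + delta_m, exactly in integers). *)
Definition DP_gens (k : fieldType) (n : nat) (la : seq nat)
  (p : {mpoly k[n]}) : Prop :=
  exists (m r : nat) (S : {set 'I_n}),
    [/\ (1 <= m <= n)%N, #|S| = m, (r <= m)%N, (m < r + delta n la m)%N
      & p = esymS k S r].

Definition bcol (la : seq nat) (kk : nat) : nat :=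
  ((\sum_(1 <= i < kk.+1) conjp la i) + 1 - kk)%N.

(* The generating set of the theorem.  t = lambda_2 - 1, s = lambda_1 - 1;
   "1 <= k <= t" is written (1 <= k < lambda_2), "s > t" is lambda_2 < lambda_1.
   If [repl] is true, the set e_{b_1}(n-1) is replaced by {x_i^{b_1}}. *)
Definition thm_gens (k : fieldType) (n : nat) (la : seq nat) (repl : bool)
  (p : {mpoly k[n]}) : Prop :=
  (exists r : nat, (1 <= r < size la)%N /\ p = esymS k [set: 'I_n] r)
  \/ (exists (kk : nat) (S : {set 'I_n}),
        [/\ (1 <= kk < part la 2)%N, ~~ (repl && (kk == 1%N)),
            #|S| = (n - kk)%N & p = esymS k S (bcol la kk)])
  \/ (repl /\ (1 < part la 2)%N /\ exists i : 'I_n, p = 'X_i ^+ bcol la 1)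
  \/ ((part la 2 < part la 1)%N /\
      exists S : {set 'I_n}, #|S| = (n - (part la 1 - 1))%N /\
        p = esymS k S (n - (part la 1 - 1))%N)
  \/ (la = nseq n 1%N /\ p = esymS k [set: 'I_n] n).

From HB Require Import structures.
From mathcomp Require Import all_boot all_order all_algebra.
From mathcomp Require Import mpoly.
From mathcomp Require Import zify ring.
Set Implicit Arguments. Unset Strict Implicit. Unset Printing Implicit Defensive.
Import GRing.Theory.

(* Write a generator e_r(S) of I_lambda with #|S| = n - k as sitting in column k: the
   condition r > m - delta_m(lambda) says exactly r >= b_k, where b_k is computed from the
   number of cells in the first k columns.  Columns k >= lambda_2 all have b_k = n - s, so
   they are generated by the square-free monomials of degree n - s.  In characteristic 0
   e_{r+1}(S) follows from e_r(S) and the e_{r+1}(T), #|T| = #|S| + 1 (column k - 1), since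
   summing e_{r+1}(S + y) = e_{r+1}(S) + x_y e_r(S) over the n - #|S| indices y outside S
   isolates (n - #|S|) e_{r+1}(S); an induction on the column index thus reduces everything
   to column 0.  Column 0 climbs together with column 1 via Euler's identity
   sum_i x_i e_r(n \ i) = (r + 1) e_{r+1}(n); for the variant with the powers x_i^{b_1}
   one uses e_r(n \ i) = (-x_i)^r modulo e_1(n), ..., e_r(n). *)

Definition colsum (la : seq nat) (kk : nat) : nat := \sum_(x <- la) minn x kk.

Lemma colsumS la kk : colsum la kk.+1 = colsum la kk + conjp la kk.+1.
Proof.
rewrite /colsum /conjp; elim: la => [|x la IH]; first by rewrite !big_nil.
by rewrite !big_cons IH /=; case: leqP; lia.
Qed.

Lemma sum_conjp la kk : \sum_(1 <= i < kk.+1) conjp la i = colsum la kk.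
Proof.
elim: kk => [|kk IH]; last by rewrite big_nat_recr //= IH colsumS.
by rewrite big_geq // /colsum big1 // => x _; rewrite minn0.
Qed.

Lemma colsum0 la : colsum la 0 = 0.
Proof. by rewrite /colsum big1 // => x _; rewrite minn0. Qed.

Lemma colsum_id la kk : all (fun x => x <= kk) la -> colsum la kk = sumn la.
Proof.
rewrite /colsum sumnE => /allP le_kk; rewrite !big_seq.
by apply: eq_bigr => x /le_kk /minn_idPl.
Qed.

Lemma colsum_le_sumn la kk : colsum la kk <= sumn la.
Proof. by rewrite /colsum sumnE; apply: leq_sum => x _; apply: geq_minl. Qed.

Lemma colsum_mono la kk : colsum la kk <= colsum la kk.+1.
Proof. by rewrite colsumS leq_addr. Qed.

Lemma colsum1 la : all (fun x => 0 < x) la -> colsum la 1 = size la.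
Proof.
elim: la => [|x la IH]; first by rewrite /colsum big_nil.
rewrite /colsum big_cons /= => /andP [x_gt0 /IH]; rewrite /colsum => ->; lia.
Qed.

Lemma colsum_parts la kk :
  colsum la kk = minn (part la 1) kk + minn (part la 2) kk + colsum (drop 2 la) kk.
Proof.
by case: la => [|a [|b la]]; rewrite /colsum /part /= ?big_cons ?big_nil ?drop0 ?min0n; lia.
Qed.

Lemma sumn_parts la : sumn la = part la 1 + part la 2 + sumn (drop 2 la).
Proof. by case: la => [|a [|b la]]; rewrite /part /= ?drop0; lia. Qed.

Lemma bcol_colsum la kk : bcol la kk = colsum la kk + 1 - kk.
Proof. by rewrite /bcol sum_conjp. Qed.

Lemma bcol0 la : bcol la 0 = 1.
Proof. by rewrite bcol_colsum colsum0. Qed.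

Lemma bcol_leq la kk r : (bcol la kk <= r) = (colsum la kk < r + kk).
Proof. rewrite bcol_colsum; lia. Qed.

Lemma delta_colsum n la kk : kk <= n -> sumn la = n ->
  delta n la (n - kk) + colsum la kk = n.
Proof.
move=> kk_le_n sum_la; rewrite /delta subKn // !addn1 -sum_conjp addnC.
rewrite -big_cat_nat ?ltnS // sum_conjp colsum_id ?sum_la //.
by apply/allP => x x_la; rewrite -sum_la sumnE (big_rem x x_la) leq_addr.
Qed.

Lemma geq_trans : transitive geq.
Proof. by move=> y x z /= yx zy; apply: leq_trans zy yx. Qed.

Section PartitionColumns.
Variables (n : nat) (la : seq nat).
Hypotheses (n_gt0 : 0 < n) (la_part : is_partition n la).
Local Notation lam1 := (part la 1).
Local Notation lam2 := (part la 2).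

Lemma sumn_partition : sumn la = n.
Proof. by case/and3P: la_part => _ _ /eqP. Qed.

Lemma partition_gt0 : all (fun x => 0 < x) la.
Proof. by case/and3P: la_part. Qed.

Lemma part1_gt0 : 0 < lam1.
Proof.
move: partition_gt0 sumn_partition n_gt0; rewrite /part.
by case: la => [|a s] /= => [_ <-|/andP []].
Qed.

Lemma part1_le_n : lam1 <= n.
Proof. by rewrite -sumn_partition (sumn_parts la) -addnA leq_addr. Qed.

Lemma size_partition_le : size la <= n.
Proof. by rewrite -sumn_partition -colsum1 ?partition_gt0 ?colsum_le_sumn. Qed.

Lemma leq_part1 : all (fun x => x <= lam1) la.
Proof.
case/and3P: la_part; rewrite /part; case: la => [|a s] //= sorted_la _ _.
by rewrite leqnn (order_path_min geq_trans sorted_la).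
Qed.

Lemma part2_le_part1 : lam2 <= lam1.
Proof.
by have := leq_part1; rewrite /part; case: la => [|a [|b s]] //= /and3P [].
Qed.

Lemma drop2_le_part2 : all (fun x => x <= lam2) (drop 2 la).
Proof.
case/and3P: la_part; rewrite /part; case: la => [|a [|b s]] //= /andP [_ sorted_s] _ _.
by rewrite drop0 (order_path_min geq_trans sorted_s).
Qed.

Lemma colsum_lt kk : kk < lam1 -> colsum la kk < n.
Proof.
rewrite colsum_parts -sumn_partition (sumn_parts la).
have := colsum_le_sumn (drop 2 la) kk; lia.
Qed.

Lemma colsum_full kk : lam1 <= kk -> colsum la kk = n.
Proof.
move=> lam1_le; rewrite -sumn_partition colsum_id //.
by apply/allP => x /(allP leq_part1) /leq_trans; apply.
Qed.

Lemma colsum_tail kk : lam2 <= kk -> colsum la kk = minn lam1 kk + lam2 + sumn (drop 2 la).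
Proof.
move=> lam2_le; rewrite colsum_parts colsum_id ?(minn_idPl lam2_le) //.
by apply/allP => x /(allP drop2_le_part2) /leq_trans; apply.
Qed.

Lemma bcol1 : bcol la 1 = size la.
Proof. by rewrite bcol_colsum colsum1 ?partition_gt0 ?addnK. Qed.

Lemma bcol_mono kk : kk < lam2 -> bcol la kk <= bcol la kk.+1.
Proof.
move=> lt_lam2; have lt_lam1 := leq_trans lt_lam2 part2_le_part1.
rewrite !bcol_colsum !(colsum_parts la) (minn_idPr lt_lam1) (minn_idPr lt_lam2).
rewrite (minn_idPr (ltnW lt_lam1)) (minn_idPr (ltnW lt_lam2)).
have := colsum_mono (drop 2 la) kk; lia.
Qed.

Lemma bcol_add_le kk : kk < lam1 -> bcol la kk + kk <= n.
Proof.
move=> lt_lam1; have := colsum_lt lt_lam1; rewrite bcol_colsum colsum_parts; lia.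
Qed.

Lemma bcol_flat kk : lam2 <= kk <= lam1 -> bcol la kk = n - (lam1 - 1).
Proof.
case/andP=> lam2_le le_lam1; have := part1_gt0.
rewrite bcol_colsum colsum_tail // -sumn_partition (sumn_parts la); lia.
Qed.

Lemma bcol_full kk : lam1 <= kk <= n -> n - kk < bcol la kk.
Proof. by case/andP=> lam1_le le_n; rewrite bcol_colsum colsum_full //; lia. Qed.

Lemma partition_one_column : lam1 <= 1 -> la = nseq n 1.
Proof.
move=> lam1_le1; rewrite -[n](colsum_full lam1_le1) colsum1 ?partition_gt0 //.
apply/all_pred1P/allP => x x_la.
by have := allP leq_part1 x x_la; have := allP partition_gt0 x x_la; rewrite /=; lia.
Qed.

Lemma delta_bcol kk r : kk <= n ->
  (n - kk < r + delta n la (n - kk)) = (bcol la kk <= r).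
Proof.
move=> kk_le_n; have := delta_colsum kk_le_n sumn_partition.
rewrite bcol_leq; lia.
Qed.

End PartitionColumns.

Local Open Scope ring_scope.

Section IdealClosure.
Variables (k : fieldType) (n : nat) (G : {mpoly k[n]} -> Prop).
Local Notation I := (in_ideal G).

Lemma in_ideal0 : I 0.
Proof. by exists [::]; rewrite big_nil. Qed.

Lemma in_ideal_gen g : G g -> I g.
Proof.
move=> Gg; exists [:: (1, g)]; split; last by rewrite big_seq1 mul1r.
by move=> q; rewrite inE => /eqP ->.
Qed.

Lemma in_idealD p q : I p -> I q -> I (p + q).
Proof.
move=> [l1 [G_l1 ->]] [l2 [G_l2 ->]]; exists (l1 ++ l2); rewrite big_cat; split=> //.
by move=> x; rewrite mem_cat => /orP [] ?; [apply: G_l1 | apply: G_l2].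
Qed.

Lemma in_idealMl a p : I p -> I (a * p).
Proof.
move=> [l [G_l ->]]; exists [seq (a * x.1, x.2) | x <- l]; split.
  by move=> x /mapP [y y_l ->]; exact: G_l y y_l.
by rewrite big_map mulr_sumr; apply: eq_bigr => x _; rewrite mulrA.
Qed.

Lemma in_idealN p : I p -> I (- p).
Proof. by rewrite -mulN1r; apply: in_idealMl. Qed.

Lemma in_idealB p q : I p -> I q -> I (p - q).
Proof. by move=> Ip /in_idealN; apply: in_idealD. Qed.

Lemma in_ideal_sum (T : Type) (s : seq T) (P : pred T) (F : T -> {mpoly k[n]}) :
  (forall x, P x -> I (F x)) -> I (\sum_(x <- s | P x) F x).
Proof.
move=> IF; elim: s => [|x s IH]; first by rewrite big_nil; apply: in_ideal0.
by rewrite big_cons; case: ifP => // Px; apply: in_idealD (IF _ Px) IH.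
Qed.

Lemma in_ideal_natrMK (c : nat) p : [pchar k] =i pred0 -> (c != 0)%N ->
  I (c%:R * p) -> I p.
Proof.
move=> /pcharf0P char0 c_neq0 /(in_idealMl (c%:R^-1)%:MP).
by rewrite mulrA -(rmorph_nat (@mpolyC n k)) -rmorphM /= mulVf ?char0 // mul1r.
Qed.

End IdealClosure.

Lemma in_ideal_trans (k : fieldType) (n : nat) (G H : {mpoly k[n]} -> Prop) p :
  (forall g, G g -> in_ideal H g) -> in_ideal G p -> in_ideal H p.
Proof.
move=> GH [l [G_l ->]]; rewrite big_seq; apply: in_ideal_sum => x x_l.
by apply/in_idealMl/GH/G_l.
Qed.

Section ElementarySymmetric.
Variables (k : fieldType) (n : nat).
Local Notation e := (@esymS k n).

Lemma esymS0 (S : {set 'I_n}) : e S 0 = 1.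
Proof.
rewrite /esymS (big_pred1 set0) ?big_set0 // => T /=.
by rewrite cards_eq0 andbC; case: eqP => [->|] //=; rewrite sub0set.
Qed.

Lemma esymS_gt (S : {set 'I_n}) r : (#|S| < r)%N -> e S r = 0.
Proof.
move=> lt_S_r; rewrite /esymS big_pred0 // => T.
apply/negP => /andP [/subset_leq_card le_T_S /eqP T_r].
by rewrite -T_r ltnNge le_T_S in lt_S_r.
Qed.

Lemma esymS_card (S : {set 'I_n}) : e S #|S| = \prod_(i in S) 'X_i.
Proof.
rewrite /esymS (big_pred1 S) // => T /=.
apply/andP/eqP => [[T_S /eqP T_card]|->]; last by rewrite subxx.
by apply/eqP; rewrite eqEcard T_S T_card leqnn.
Qed.

Lemma esymS_set1 i : e [set i] 1 = 'X_i.
Proof. by rewrite -(cards1 i) esymS_card big_set1. Qed.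

Lemma subset_setU1 (T S : {set 'I_n}) i : i \notin T ->
  (T \subset i |: S) = (T \subset S).
Proof.
move=> iNT; apply/subsetP/subsetP => sub x x_T; last by rewrite in_setU1 sub ?orbT.
by case/setU1P: (sub x x_T) => // x_i; move: iNT; rewrite -x_i x_T.
Qed.

Lemma esymS_setU1_mem i (S : {set 'I_n}) r : i \notin S ->
  \sum_(T : {set 'I_n} | (T \subset i |: S) && (#|T| == r.+1) && (i \in T))
     \prod_(j in T) 'X_j = 'X_i * e S r.
Proof.
move=> iNS; rewrite (reindex_onto (fun T => i |: T) (fun T => T :\ i)); last first.
  by move=> T /andP [_ i_T]; rewrite setD1K.
rewrite /esymS mulr_sumr; apply: eq_big => T.
  rewrite setU11 andbT; case i_T: (i \in T).
    rewrite (setUidPr _) ?sub1set // eqEsubset subD1set /=.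
    have -> : (T \subset T :\ i) = false.
      by apply/negP => /subsetP/(_ i i_T); rewrite setD11.
    have -> : (T \subset S) = false.
      by apply/negP => /subsetP/(_ i i_T); rewrite (negbTE iNS).
    by rewrite andbF.
  by rewrite setU1K ?i_T // eqxx andbT subUset sub1set setU11 subset_setU1 ?i_T // cardsU1 i_T.
move=> /andP [_ /eqP T_eq]; have iNT : i \notin T by rewrite -T_eq setD11.
by rewrite big_setU1.
Qed.

Lemma esymS_setU1 i (S : {set 'I_n}) r : i \notin S ->
  e (i |: S) r.+1 = e S r.+1 + 'X_i * e S r.
Proof.
move=> iNS; rewrite {1}/esymS (bigID [pred T : {set 'I_n} | i \in T]) /= addrC esymS_setU1_mem //.
congr (_ + _); apply: eq_bigl => T; case i_T: (i \in T); rewrite ?andbF ?andbT.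
  by apply/esym/negP => /andP [/subsetP T_S _]; move: iNS; rewrite T_S.
by rewrite subset_setU1 ?i_T.
Qed.

Lemma sum_X_esymS_setD1 (A : {set 'I_n}) r :
  \sum_(i in A) 'X_i * e (A :\ i) r = r.+1%:R * e A r.+1.
Proof.
transitivity (\sum_(i in A) \sum_(T : {set 'I_n} | (T \subset A) &&
      (#|T| == r.+1) && (i \in T)) \prod_(j in T) ('X_j : {mpoly k[n]})).
  by apply: eq_bigr => i i_A; rewrite -esymS_setU1_mem ?setD11 // setD1K.
rewrite (exchange_big_dep (fun T : {set 'I_n} => (T \subset A) && (#|T| == r.+1)));
  last by move=> i T _ /andP [].
rewrite /esymS mulr_sumr; apply: eq_bigr => T /andP [T_A /eqP T_card].
rewrite (eq_bigl (mem T)) => [|i]; first by rewrite sumr_const T_card mulr_natl.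
by rewrite /= T_A T_card eqxx /=; case i_T: (i \in T); rewrite ?andbF ?andbT // (subsetP T_A).
Qed.

Lemma esymS_setC1 i r : e [set~ i] r.+1 = e [set: 'I_n] r.+1 - 'X_i * e [set~ i] r.
Proof. by rewrite -(setUCr [set i]) esymS_setU1 ?setC11 // addrK. Qed.

Lemma sum_X_esymS_setC1 r :
  \sum_i 'X_i * e [set~ i] r = r.+1%:R * e [set: 'I_n] r.+1.
Proof.
by rewrite -sum_X_esymS_setD1; apply: eq_big => [i|i _]; rewrite ?in_setT // -setTD.
Qed.

Lemma sum_esymS_setC1 r : (r < n)%N ->
  \sum_i e [set~ i] r.+1 = (n - r.+1)%:R * e [set: 'I_n] r.+1.
Proof.
move=> lt_r_n; under eq_bigr => i _ do rewrite esymS_setC1.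
by rewrite sumrB sum_X_esymS_setC1 sumr_const card_ord natrB // mulrBl [n%:R * _]mulr_natl.
Qed.

Lemma exists_subset_card (T : {set 'I_n}) q : (q <= #|T|)%N ->
  exists2 U : {set 'I_n}, U \subset T & #|U| = q.
Proof.
move=> le_q_T; exists [set x in take q (enum T)].
  by apply/subsetP => x; rewrite inE => /mem_take; rewrite mem_enum.
rewrite cardsE; move/card_uniqP: (take_uniq q (enum_uniq (mem T))) => ->.
by rewrite size_takel // -cardE.
Qed.

Lemma card_setT (T : {set 'I_n}) : #|T| = n -> T = [set: 'I_n].
Proof. by move=> T_card; apply/eqP; rewrite eqEcard subsetT cardsT card_ord T_card leqnn. Qed.

Lemma card_setC1 (S : {set 'I_n}) : (0 < n)%N -> #|S| = n.-1 -> exists i, S = [set~ i].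
Proof.
move=> n_gt0 S_card; have /cards1P [i Si] : #|~: S| == 1%N.
  by apply/eqP; have := cardsC S; rewrite card_ord S_card; lia.
by exists i; rewrite -Si setCK.
Qed.

(* Each monomial of e_r(S) is divisible by a square-free monomial of degree q <= r. *)
Lemma esymS_in_ideal_monomials (G : {mpoly k[n]} -> Prop) q r (S : {set 'I_n}) :
  (q <= r)%N ->
  (forall U : {set 'I_n}, #|U| = q -> in_ideal G (\prod_(j in U) 'X_j)) ->
  in_ideal G (e S r).
Proof.
move=> le_q_r IU; rewrite /esymS; apply: in_ideal_sum => T /andP [_ /eqP T_card].
have [|U U_T U_card] := @exists_subset_card T q; first by rewrite T_card.
by rewrite (big_setID U) /= (setIidPr U_T) mulrC; apply/in_idealMl/IU.
Qed.

End ElementarySymmetric.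

Section CharZero.
Variables (k : fieldType) (n : nat) (G : {mpoly k[n]} -> Prop).
Hypotheses (char_k : [pchar k] =i pred0) (n_gt0 : (0 < n)%N).
Local Notation I := (in_ideal G).
Local Notation e := (@esymS k n).

Lemma esymS_succ_in_ideal (S : {set 'I_n}) r : (#|S| < n)%N ->
  (forall T : {set 'I_n}, #|T| = #|S|.+1 -> I (e T r.+1)) ->
  I (e S r) -> I (e S r.+1).
Proof.
move=> lt_S_n IT IS; have card_SC : #|~: S| = (n - #|S|)%N.
  by have := cardsC S; rewrite card_ord; lia.
have sum_setU1 : \sum_(y in ~: S) e (y |: S) r.+1 =
    #|~: S|%:R * e S r.+1 + (\sum_(y in ~: S) 'X_y) * e S r.
  rewrite mulr_suml mulr_natl -sumr_const -big_split /=.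
  by apply: eq_bigr => y; rewrite in_setC => yNS; rewrite esymS_setU1.
apply: (@in_ideal_natrMK _ _ _ #|~: S|) => //; first by rewrite card_SC subn_eq0 -ltnNge.
rewrite -[_ * _](addrK ((\sum_(y in ~: S) 'X_y) * e S r)) -sum_setU1.
apply: in_idealB; last exact: in_idealMl.
by apply: in_ideal_sum => y; rewrite in_setC => yNS; apply: IT; rewrite cardsU1 yNS.
Qed.

Lemma esymS_setC1_congr i r :
  (forall j, (0 < j <= r)%N -> I (e [set: 'I_n] j)) ->
  I (e [set~ i] r - (- 'X_i) ^+ r).
Proof.
elim: r => [|r IH] Ie; first by rewrite esymS0 expr0 subrr; apply: in_ideal0.
have -> : e [set~ i] r.+1 - (- 'X_i) ^+ r.+1 =
    e [set: 'I_n] r.+1 - 'X_i * (e [set~ i] r - (- 'X_i) ^+ r).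
  by rewrite esymS_setC1 exprS; ring.
apply: in_idealB; first by apply: Ie; rewrite ltnSn.
by apply/in_idealMl/IH => j /andP [j_gt0 j_le]; apply: Ie; rewrite j_gt0 ltnW.
Qed.

Lemma esymS_setT_in_ideal l :
  (forall r, (0 < r < l)%N -> I (e [set: 'I_n] r)) ->
  I (e [set: 'I_n] l) -> (forall i, I (e [set~ i] l)) ->
  forall r, (0 < r)%N -> I (e [set: 'I_n] r).
Proof.
move=> I_lt I_l I_C1.
suff I_ge d : I (e [set: 'I_n] (l + d)) /\ forall i, I (e [set~ i] (l + d)).
  move=> r r_gt0; case: (ltnP r l) => [lt_r_l|le_l_r]; first by apply: I_lt; rewrite r_gt0.
  by have [] := I_ge (r - l)%N; rewrite subnKC.
elim: d => [|d [IH_T IH_C1]]; first by rewrite addn0.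
have I_T : I (e [set: 'I_n] (l + d).+1).
  apply: (@in_ideal_natrMK _ _ _ (l + d).+1) => //.
  by rewrite -sum_X_esymS_setC1; apply: in_ideal_sum => i _; apply: in_idealMl.
rewrite addnS; split=> // i.
by rewrite esymS_setC1; apply: in_idealB => //; apply: in_idealMl.
Qed.

Lemma esymS_levels_in_ideal (K : nat) (b : nat -> nat) :
  (K <= n)%N ->
  (forall r, (b 0%N <= r)%N -> I (e [set: 'I_n] r)) ->
  (forall kk, (kk.+1 < K)%N -> (b kk <= b kk.+1)%N) ->
  (forall kk (S : {set 'I_n}), (0 < kk < K)%N -> #|S| = (n - kk)%N -> I (e S (b kk))) ->
  forall kk (S : {set 'I_n}) r,
    (kk < K)%N -> #|S| = (n - kk)%N -> (b kk <= r)%N -> I (e S r).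
Proof.
move=> le_K_n I_T b_mono I_gen; elim=> [|kk IH] S r lt_kk_K S_card le_b_r.
  by rewrite (card_setT (_ : #|S| = n)) ?S_card ?subn0 //; apply: I_T.
rewrite -(subnKC le_b_r); elim: (r - b kk.+1)%N => [|d IHd]; first by rewrite addn0; apply: I_gen.
rewrite addnS; apply: esymS_succ_in_ideal => //; first by rewrite S_card; lia.
move=> T T_card; apply: IH; [exact: ltnW | rewrite T_card S_card; lia |].
by have := b_mono kk lt_kk_K; lia.
Qed.

End CharZero.

Section DeConciniProcesi.
Variables (k : fieldType) (n : nat) (la : seq nat).
Hypotheses (n_gt0 : (0 < n)%N) (la_part : is_partition n la).
Local Notation e := (@esymS k n).
Local Notation lam1 := (part la 1).
Local Notation lam2 := (part la 2).
Local Notation l := (size la).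
Local Notation DP := (in_ideal (@DP_gens k n la)).

Lemma DP_gensE kk (S : {set 'I_n}) r : (kk < n)%N -> #|S| = (n - kk)%N ->
  (r <= n - kk)%N -> (bcol la kk <= r)%N -> @DP_gens k n la (e S r).
Proof.
move=> lt_kk_n S_card le_r_S le_b_r; exists (n - kk)%N, r, S.
by rewrite (delta_bcol n_gt0 la_part _ (ltnW lt_kk_n)) le_b_r; split=> //; lia.
Qed.

Lemma DP_gensP g : @DP_gens k n la g ->
  exists kk (S : {set 'I_n}) r,
    [/\ (kk < n)%N, #|S| = (n - kk)%N, (bcol la kk <= r)%N & g = e S r].
Proof.
case=> m [r [S [/andP [m_gt0 le_m_n] S_card _ lt_m ->]]].
exists (n - m)%N, S, r.
by rewrite -(delta_bcol n_gt0 la_part _ (leq_subr m n)) !subKn //; split=> //; lia.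
Qed.

Lemma DP_setT r : (0 < r <= n)%N -> DP (e [set: 'I_n] r).
Proof.
case/andP=> r_gt0 le_r_n; apply/in_ideal_gen/(@DP_gensE 0);
  by rewrite ?subn0 ?bcol0 ?cardsT ?card_ord.
Qed.

Lemma DP_column kk (S : {set 'I_n}) : (kk < lam1)%N -> #|S| = (n - kk)%N ->
  DP (e S (bcol la kk)).
Proof.
move=> lt_kk_lam1 S_card; have le_b_n := bcol_add_le n_gt0 la_part lt_kk_lam1.
have le_lam1_n := part1_le_n la_part.
by apply/in_ideal_gen/(@DP_gensE kk) => //; lia.
Qed.

Lemma thm_gens_in_DP repl g : @thm_gens k n la repl g -> DP g.
Proof.
have le_l_n := size_partition_le la_part; have le_lam2_lam1 := part2_le_part1 la_part.
case=> [[r [/andP [r_gt0 lt_r_l] ->]] | [[kk [S [/andP [kk_gt0 lt_kk_lam2] _ S_card ->]]] |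
        [[_ [lam2_gt1 [i ->]]] | [[lt_lam2_lam1 [S [S_card ->]]] | [_ ->]]]]].
- by apply: DP_setT; rewrite r_gt0 ltnW // (leq_trans lt_r_l).
- by apply: DP_column => //; apply: leq_trans le_lam2_lam1.
- have DP_C1 : DP (e [set~ i] l) by rewrite -(bcol1 la_part); apply: DP_column;
    rewrite ?cardsC1 ?card_ord ?subn1 //; apply: leq_trans le_lam2_lam1.
  have DP_congr : DP (e [set~ i] l - (- 'X_i) ^+ l).
    apply: esymS_setC1_congr => j /andP [j_gt0 le_j_l]; apply: DP_setT.
    by rewrite j_gt0 (leq_trans le_j_l).
  rewrite (bcol1 la_part) -[_ ^+ l](signrMK l) -exprNn; apply: in_idealMl.
  have -> : (- 'X_i) ^+ l = e [set~ i] l - (e [set~ i] l - (- 'X_i) ^+ l).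
    by rewrite opprB addrC subrK.
  exact: in_idealB.
- have lam1_gt0 := part1_gt0 n_gt0 la_part.
  have flat : bcol la (lam1 - 1) = (n - (lam1 - 1))%N.
    by apply: bcol_flat => //; apply/andP; split; lia.
  by rewrite -flat; apply: DP_column => //; lia.
- by apply: DP_setT; rewrite n_gt0 leqnn.
Qed.

Section FromDeConciniProcesi.
Variable repl : bool.
Hypothesis char_k : [pchar k] =i pred0.
Local Notation J := (in_ideal (@thm_gens k n la repl)).

Lemma thm_setT_lt r : (0 < r < l)%N -> J (e [set: 'I_n] r).
Proof. by move=> r_bounds; apply: in_ideal_gen; left; exists r. Qed.

Lemma thm_last_column (S : {set 'I_n}) r : (lam2 < lam1)%N ->
  (n - (lam1 - 1) <= r)%N -> J (e S r).
Proof.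
move=> lt_lam2_lam1 le_q_r; apply: esymS_in_ideal_monomials le_q_r _ => U U_card.
by rewrite -esymS_card U_card; apply: in_ideal_gen; do 3 right; left; split=> //; exists U.
Qed.

Lemma thm_column1 : (1 < lam2)%N ->
  J (e [set: 'I_n] l) /\ forall i, J (e [set~ i] l).
Proof.
move=> lam2_gt1; have lt_l_n : (l < n)%N.
  have := bcol_add_le n_gt0 la_part (leq_trans lam2_gt1 (part2_le_part1 la_part)).
  by rewrite (bcol1 la_part) addn1.
have [l' l_eq] : exists l', l = l'.+1.
  by move: (part1_gt0 n_gt0 la_part); rewrite /part; case: (la) => // a s _; exists (size s).
case/orP: (orbN repl) => [repl_true | repl_false].
- have X_e i : J ('X_i * e [set~ i] l').
    have -> : 'X_i * e [set~ i] l' =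
        'X_i * (e [set~ i] l' - (- 'X_i) ^+ l') - (- 'X_i) ^+ l'.+1.
      by rewrite exprS; set Y := _ ^+ l'; ring.
    apply: in_idealB; first apply/in_idealMl/esymS_setC1_congr => j /andP [j_gt0 le_j_l'].
      by apply: thm_setT_lt; rewrite j_gt0 l_eq ltnS.
    rewrite exprNn -l_eq; apply/in_idealMl/in_ideal_gen; right; right; left; do 2 split=> //.
    by exists i; rewrite (bcol1 la_part).
  have J_T : J (e [set: 'I_n] l).
    apply: (@in_ideal_natrMK _ _ _ l) => //; first by rewrite l_eq.
    by rewrite l_eq -sum_X_esymS_setC1; apply: in_ideal_sum => i _; apply: X_e.
  by split=> // i; rewrite l_eq esymS_setC1 -l_eq; apply: in_idealB.
- have J_C1 i : J (e [set~ i] l).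
    apply: in_ideal_gen; right; left; exists 1%N, [set~ i].
    by rewrite cardsC1 card_ord subn1 (bcol1 la_part) (negbTE repl_false); split.
  split=> //; apply: (@in_ideal_natrMK _ _ _ (n - l)) => //; first by rewrite subn_eq0 -ltnNge.
  rewrite l_eq -sum_esymS_setC1 -l_eq ?(ltnW lt_l_n) //.
  by apply: in_ideal_sum => i _.
Qed.

Lemma thm_setT r : (0 < r)%N -> J (e [set: 'I_n] r).
Proof.
move=> r_gt0; case: (ltnP 1 lam2) => [lam2_gt1|lam2_le1].
  have [J_T J_C1] := thm_column1 lam2_gt1.
  by apply: (esymS_setT_in_ideal char_k _ J_T J_C1) => // j; apply: thm_setT_lt.
case: (ltnP r l) => [lt_r_l|le_l_r]; first by apply: thm_setT_lt; rewrite r_gt0.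
case: (ltnP n r) => [lt_n_r|le_r_n].
  by rewrite esymS_gt ?cardsT ?card_ord //; apply: in_ideal0.
have lam1_gt0 := part1_gt0 n_gt0 la_part.
case: (ltnP lam2 lam1) => [lt_lam2_lam1|le_lam1_lam2].
  have flat : bcol la 1 = (n - (lam1 - 1))%N by apply: bcol_flat => //; apply/andP; split; lia.
  by apply: thm_last_column; rewrite // -flat (bcol1 la_part).
have lam1_le1 : (lam1 <= 1)%N by apply: leq_trans le_lam1_lam2 lam2_le1.
have l_n : l = n by rewrite (partition_one_column n_gt0 la_part lam1_le1) size_nseq.
have -> : r = n by apply/eqP; rewrite eqn_leq le_r_n -l_n.
by apply: in_ideal_gen; do 4 right; rewrite (partition_one_column n_gt0 la_part lam1_le1).
Qed.

Lemma DP_gens_in_thm g : @DP_gens k n la g -> J g.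
Proof.
case/DP_gensP=> kk [S [r [lt_kk_n S_card le_b_r ->]]].
case: (posnP kk) => [kk0|kk_gt0].
  rewrite (card_setT (_ : #|S| = n)) ?S_card ?kk0 ?subn0 //.
  by apply: thm_setT; move: le_b_r; rewrite kk0 bcol0.
case: (ltnP kk lam2) => [lt_kk_lam2|le_lam2_kk].
  apply: (esymS_levels_in_ideal char_k n_gt0 (b := bcol la)) lt_kk_lam2 S_card le_b_r.
  - by apply: leq_trans (part2_le_part1 la_part) (part1_le_n la_part).
  - by move=> r'; rewrite bcol0; apply: thm_setT.
  - by move=> kk' lt_kk'; apply: (bcol_mono n_gt0 la_part); apply: ltnW.
  move=> kk' S' /andP [kk'_gt0 lt_kk'] S'_card.
  case repl_kk: (repl && (kk' == 1%N)); last first.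
    by apply: in_ideal_gen; right; left; exists kk', S'; rewrite repl_kk kk'_gt0.
  move: lt_kk' S'_card; case/andP: repl_kk => _ /eqP ->.
  rewrite subn1 => lam2_gt1 /(card_setC1 n_gt0) [i ->].
  by rewrite (bcol1 la_part); have [_] := thm_column1 lam2_gt1; apply.
case: (ltnP kk lam1) => [lt_kk_lam1|le_lam1_kk].
  apply: thm_last_column; first exact: leq_ltn_trans le_lam2_kk lt_kk_lam1.
  by rewrite -(bcol_flat n_gt0 la_part (kk := kk)) // le_lam2_kk ltnW.
rewrite esymS_gt; first exact: in_ideal0.
by rewrite S_card (leq_trans (bcol_full n_gt0 la_part _)) // le_lam1_kk ltnW.
Qed.

End FromDeConciniProcesi.

End DeConciniProcesi.

Lemma esymS_in_ideal_X (k : fieldType) (n : nat) (S : {set 'I_n}) r : (0 < r)%N ->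
  in_ideal (fun q : {mpoly k[n]} => exists i : 'I_n, q = 'X_i) (esymS k S r).
Proof.
move=> r_gt0; apply: (esymS_in_ideal_monomials _ r_gt0) => U /eqP/cards1P [i ->].
by rewrite big_set1; apply: in_ideal_gen; exists i.
Qed.

Section OneRow.
Variables (k : fieldType) (n : nat).
Hypothesis n_gt0 : (0 < n)%N.

Lemma thm_gens_one_row g : @thm_gens k n [:: n] false g ->
  in_ideal (fun q => exists i : 'I_n, q = 'X_i) g.
Proof.
case=> [[r [/andP [r_gt0 _] ->]] | [[kk [S [/andP [_ //] _ _ _]]] | [[//] |
        [[_ [S [_ ->]]] | [_ ->]]]]]; apply: esymS_in_ideal_X => //.
by rewrite /part /=; lia.
Qed.

Lemma X_in_thm_one_row (i : 'I_n) : in_ideal (@thm_gens k n [:: n] false) 'X_i.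
Proof.
apply: in_ideal_gen; do 3 right; left; rewrite /part /= subKn //; split=> //.
by exists [set i]; rewrite cards1 esymS_set1.
Qed.

End OneRow.

Theorem mainTheorem5 (k : fieldType) (hk : [pchar k] =i pred0)
  (n : nat) (hn : (0 < n)%N) (la : seq nat) (hla : is_partition n la) :
  (forall repl : bool, forall p : {mpoly k[n]},
     in_ideal (@thm_gens k n la repl) p <-> in_ideal (@DP_gens k n la) p)
  /\ (la = [:: n] -> forall p : {mpoly k[n]},
     in_ideal (@DP_gens k n la) p <-> in_ideal (fun q => exists i : 'I_n, q = 'X_i) p).
Proof.
have thm_DP repl p : in_ideal (@thm_gens k n la repl) p <-> in_ideal (@DP_gens k n la) p.
  by split; apply: in_ideal_trans => g; [apply: thm_gens_in_DP | apply: DP_gens_in_thm].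
split=> // la_row p; rewrite -(thm_DP false) la_row.
split; apply: in_ideal_trans; first exact: thm_gens_one_row.
by move=> _ [i ->]; apply: X_in_thm_one_row.
Qed.
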